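(* Let $G_1$ and $G_2$ be the local OPERA DAGs held by two honest nodes. Then $G_1$ and $G_2$ are consistent, i.e. for every event $v$ contained in both $G_1$ and $G_2$ we have $G_1[v] = G_2[v]$.
   Context: An OPERA DAG is a finite directed acyclic graph $G=(V,E)$ whose vertices are event blocks (events). Each event contains a list of references to its parent events, given by their cryptographic hashes. The edge $(v_i,v_j)\in E$ means that $v_i$ references $v_j$ as a parent. Cryptographic hashes are assumed secure, so the hash references of an event determine its parents uniquely. An honest node adds a received or created event $v$ to its local OPERA DAG only if it already has all the parents referenced by $v$, and it then adds the edges from $v$ to those parents. For a vertex $v$ of $G$, $G[v]=(V_v,E_v)$ denotes the subgraph of $G$ induced on $V_v$, the set consisting of $v$ and all its ancestors (the vertices reachable from $v$ by following edges). Two OPERA DAGs $G_1,G_2$ are consistent, written $G_1\sim G_2$, if $G_1[v]=G_2[v]$ for every event $v$ contained in both. *)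

From Stdlib Require Import List Relations.
Import ListNotations.
Set Implicit Arguments.

(* Events are abstract; their content is global: every event e carries
   [parents e], the list of hashes of its parent events.  [hash] is the
   cryptographic hash function. *)

(* An OPERA DAG: finite vertex list and edge relation ((x,y) means x references y). *)
Record opera_dag (Event : Type) := mkDag {
  dverts : list Event;
  dedges : Event -> Event -> Prop
}.

Inductive honest_dag {Event Hash : Type} (hash : Event -> Hash)
    (parents : Event -> list Hash) : opera_dag Event -> Prop :=
| hd_empty : honest_dag hash parents (mkDag (@nil Event) (fun _ _ => False))
| hd_add (G : opera_dag Event) (v : Event) :
    honest_dag hash parents G ->
    ~ In v (dverts G) ->
    (forall h, In h (parents v) -> exists u, In u (dverts G) /\ hash u = h) ->
    honest_dag hash parents
      (mkDag (v :: dverts G)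
             (fun x y => dedges G x y \/
                         (x = v /\ In y (dverts G) /\ In (hash y) (parents v)))).

Definition anc_set {Event} (G : opera_dag Event) (v : Event) : Event -> Prop :=
  fun u => In u (dverts G) /\ clos_refl_trans Event (dedges G) v u.

(* G[v] : the subgraph of G induced on V_v, as (vertex set, edge set). *)
Definition sub_at {Event} (G : opera_dag Event) (v : Event)
  : (Event -> Prop) * (Event -> Event -> Prop) :=
  (anc_set G v, fun x y => anc_set G v x /\ anc_set G v y /\ dedges G x y).

Definition consistent {Event} (G1 G2 : opera_dag Event) : Prop :=
  forall v, In v (dverts G1) -> In v (dverts G2) -> sub_at G1 v = sub_at G2 v.

(* With an injective hash, the parents of an event are determined by the event
   itself.  Hence in every honest DAG the vertex set is closed under the global
   relation "x references y", and the edges are exactly the references between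
   vertices.  So G[v] is the set of events reachable from v by references,
   together with the references among them: it does not depend on G. *)

From Stdlib Require Import List Relations.
From Stdlib Require Import FunctionalExtensionality PropExtensionality.

Section HonestDag.

Context {Event Hash : Type} {hash : Event -> Hash} {parents : Event -> list Hash}.
Hypothesis hash_inj : forall e1 e2 : Event, hash e1 = hash e2 -> e1 = e2.

Definition references (x y : Event) : Prop := In (hash y) (parents x).

Lemma honest_dag_references_closed {G x y} :
  honest_dag hash parents G -> In x (dverts G) -> references x y -> In y (dverts G).
Proof.
  intros HG; revert x y.
  induction HG as [|G v _ IH _ Hparents]; simpl; intros x y Hx Hxy; [contradiction|].
  destruct Hx as [<- | Hx].
  - destruct (Hparents _ Hxy) as [u [Hu Hhash]].
    apply hash_inj in Hhash; subst u; right; exact Hu.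
  - right; exact (IH x y Hx Hxy).
Qed.

Lemma honest_dag_edgesE {G} x y :
  honest_dag hash parents G ->
  dedges G x y <-> In x (dverts G) /\ In y (dverts G) /\ references x y.
Proof.
  intros HG; revert x y.
  induction HG as [|G v HG IH Hfresh Hparents]; simpl; intros x y; [tauto|].
  rewrite IH; unfold references; split.
  - intros [[? [? ?]] | [-> [? ?]]]; tauto.
  - intros [[<- | Hx] [[<- | Hy] Hxy]].
    + destruct (Hparents _ Hxy) as [u [Hu Hhash]].
      apply hash_inj in Hhash; subst u; contradiction.
    + right; tauto.
    + exfalso; exact (Hfresh (honest_dag_references_closed HG Hx Hxy)).
    + left; tauto.
Qed.

Lemma honest_dag_reachable_closed {G v u} :
  honest_dag hash parents G -> In v (dverts G) ->
  clos_refl_trans Event references v u -> In u (dverts G).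
Proof.
  intros HG Hv Hvu; revert Hv.
  induction Hvu as [x y Hxy | x | x y z _ IHxy _ IHyz]; intros Hx.
  - exact (honest_dag_references_closed HG Hx Hxy).
  - exact Hx.
  - exact (IHyz (IHxy Hx)).
Qed.

Lemma anc_setE {G v} u :
  honest_dag hash parents G -> In v (dverts G) ->
  anc_set G v u <-> clos_refl_trans Event references v u.
Proof.
  intros HG Hv; unfold anc_set; split.
  - intros [_ Hvu]; clear Hv; induction Hvu as [x y Hxy | x | x y z _ IHxy _ IHyz].
    + apply rt_step; apply (honest_dag_edgesE _ _ HG) in Hxy; tauto.
    + apply rt_refl.
    + exact (rt_trans _ _ _ _ _ IHxy IHyz).
  - intros Hvu; split; [exact (honest_dag_reachable_closed HG Hv Hvu) |].
    apply clos_rt_rt1n in Hvu; induction Hvu as [x | x y z Hxy _ IHyz].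
    + apply rt_refl.
    + pose proof (honest_dag_references_closed HG Hv Hxy) as Hy.
      apply (rt_trans _ _ _ y); [apply rt_step | exact (IHyz Hy)].
      apply (honest_dag_edgesE _ _ HG); tauto.
Qed.

Lemma sub_atE {G v} :
  honest_dag hash parents G -> In v (dverts G) ->
  sub_at G v =
    (clos_refl_trans Event references v,
     fun x y => clos_refl_trans Event references v x /\
                clos_refl_trans Event references v y /\ references x y).
Proof.
  intros HG Hv; unfold sub_at; f_equal.
  - extensionality u; apply propositional_extensionality; exact (anc_setE u HG Hv).
  - extensionality x; extensionality y; apply propositional_extensionality.
    rewrite (anc_setE x HG Hv), (anc_setE y HG Hv), (honest_dag_edgesE _ _ HG).
    split; [tauto |].
    intros [Hvx [Hvy Hxy]].
    pose proof (honest_dag_reachable_closed HG Hv Hvx) as Hx.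
    pose proof (honest_dag_reachable_closed HG Hv Hvy) as Hy.
    tauto.
Qed.

End HonestDag.

Theorem mainTheorem1 (Event Hash : Type) (hash : Event -> Hash)
    (parents : Event -> list Hash)
    (hash_secure : forall e1 e2 : Event, hash e1 = hash e2 -> e1 = e2)
    (G1 G2 : opera_dag Event) :
  honest_dag hash parents G1 -> honest_dag hash parents G2 ->
  consistent G1 G2.
Proof.
  intros HG1 HG2 v Hv1 Hv2.
  rewrite (sub_atE hash_secure HG1 Hv1), (sub_atE hash_secure HG2 Hv2).
  reflexivity.
Qed.
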